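(* The energy $W^-_{\mathrm{magic}}\colon\mathrm{GL}^+(2)\to\mathbb{R}$, \[ W^-_{\mathrm{magic}}(F)=\frac{\lambda_{\max}}{\lambda_{\min}}+\log\!\left(\frac{\lambda_{\max}}{\lambda_{\min}}\right)-\log(\lambda_{\max}\lambda_{\min})=\frac{\lambda_{\max}}{\lambda_{\min}}-2\log\lambda_{\min}, \] where $\lambda_{\max}\ge\lambda_{\min}>0$ are the ordered singular values of $F$, is polyconvex.
   Context: $\mathrm{GL}^+(2)=\{F\in\mathbb{R}^{2\times2}:\det F>0\}$. A function $W\colon\mathrm{GL}^+(2)\to\mathbb{R}$ is polyconvex if its extension $\widehat W\colon\mathbb{R}^{2\times2}\to\mathbb{R}\cup\{+\infty\}$ ($\widehat W=W$ on $\mathrm{GL}^+(2)$, $+\infty$ elsewhere) can be written as $\widehat W(F)=P(F,\det F)$ for all $F\in\mathbb{R}^{2\times2}$ with some convex function $P\colon\mathbb{R}^{2\times2}\times\mathbb{R}\to\mathbb{R}\cup\{+\infty\}$. *)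

From HB Require Import structures.
From mathcomp Require Import all_boot all_order all_algebra.
From mathcomp Require Import all_classical all_reals.
From mathcomp Require Import ereal exp.
Set Implicit Arguments. Unset Strict Implicit. Unset Printing Implicit Defensive.
Import Order.TTheory GRing.Theory Num.Theory.
Local Open Scope ring_scope.

Section Defs.
Variable R : realType.

(* C is symmetric positive semidefinite 2x2, its eigenvalues are the two
   (real, nonnegative) roots of its characteristic polynomial
   X^2 - tr C X + det C, i.e. (tr C +- sqrt(tr C^2 - 4 det C))/2. *)
Definition eig_max_sym2 (C : 'M[R]_2) : R :=
  (\tr C + Num.sqrt (\tr C ^+ 2 - 4 * \det C)) / 2.
Definition eig_min_sym2 (C : 'M[R]_2) : R :=
  (\tr C - Num.sqrt (\tr C ^+ 2 - 4 * \det C)) / 2.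

Definition sv_max (F : 'M[R]_2) : R := Num.sqrt (eig_max_sym2 (F^T *m F)).
Definition sv_min (F : 'M[R]_2) : R := Num.sqrt (eig_min_sym2 (F^T *m F)).

Definition W_magic_minus (F : 'M[R]_2) : R :=
  sv_max F / sv_min F + ln (sv_max F / sv_min F) - ln (sv_max F * sv_min F).

Definition ext_GLp (W : 'M[R]_2 -> R) (F : 'M[R]_2) : \bar R :=
  if 0 < \det F then (W F)%:E else +oo%E.

Definition convex_ext (P : 'M[R]_2 * R -> \bar R) : Prop :=
  (forall x, P x != -oo%E) /\
  (forall (x y : 'M[R]_2 * R) (t : R), 0 < t < 1 ->
     (P ((t *: x.1 + (1 - t) *: y.1)%R, (t * x.2 + (1 - t) * y.2)%R)
       <= t%:E * P x + (1 - t)%:E * P y)%E).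

Definition polyconvex (W : 'M[R]_2 -> R) : Prop :=
  exists P : 'M[R]_2 * R -> \bar R,
    convex_ext P /\ forall F : 'M[R]_2, ext_GLp W F = P (F, \det F).

End Defs.

From mathcomp Require Import all_boot all_order all_algebra.
From mathcomp Require Import all_classical all_reals.
From mathcomp Require Import ereal exp.
From mathcomp Require Import complex lra ring.
Import Order.TTheory GRing.Theory Num.Theory.
Set Implicit Arguments.
Unset Strict Implicit.
Unset Printing Implicit Defensive.
Local Open Scope ring_scope.
Local Open Scope complex_scope.

(* Identify R^2 with C and write F z = (alpha z + beta conj(z)) / 2.  The
   singular values x >= y of F are (|alpha| +- |beta|) / 2 when det F >= 0, so
   x - y = |beta| and x y = det F; in these variables W(F) = x/y - 2 ln y equals
   Phi(|beta|, det F), where Phi(b, d) = sup_(s > 0) (2 b s - d s^2 + 2 + 2 ln s)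
   is attained at s = 1/y.  Being a supremum of functions affine in (b, d) and
   nondecreasing in b, Phi is convex and nondecreasing in b; as F |-> |beta| is
   convex, Phi(|beta(F)|, d), extended by +oo for d <= 0, is a convex function
   of (F, d). *)

Lemma det_mx2 (R : comPzRingType) (A : 'M[R]_2) :
  \det A = A 0 0 * A 1 1 - A 0 1 * A 1 0.
Proof.
rewrite (expand_det_row _ ord0) !big_ord_recl big_ord0 addr0.
rewrite /cofactor !det_mx11 !mxE /= !expr0 expr1 mul1r mulN1r mulrN.
by congr (A _ _ * A _ _ - A _ _ * A _ _); apply/val_inj.
Qed.

Lemma mxtrace_mx2 (R : pzRingType) (A : 'M[R]_2) : \tr A = A 0 0 + A 1 1.
Proof.
rewrite /mxtrace !big_ord_recl big_ord0 addr0.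
by congr (A _ _ + A _ _); apply/val_inj.
Qed.

Lemma mulmx2E (R : pzRingType) (A B : 'M[R]_2) i j :
  (A *m B) i j = A i 0 * B 0 j + A i 1 * B 1 j.
Proof.
rewrite mxE !big_ord_recl big_ord0 addr0.
by congr (A _ _ * B _ _ + A _ _ * B _ _); apply/val_inj.
Qed.

Section ComplexNorm.
Variable R : rcfType.

Lemma normRcE (a b : R) : `|(a +i* b : Rcomplex R)| = Num.sqrt (a ^+ 2 + b ^+ 2).
Proof. by []. Qed.

Lemma sqr_normRc (a b : R) : `|(a +i* b : Rcomplex R)| ^+ 2 = a ^+ 2 + b ^+ 2.
Proof. by rewrite normRcE sqr_sqrtr // addr_ge0 ?sqr_ge0. Qed.

Lemma normRcZ (t : R) (z : Rcomplex R) : `|t *: z| = `|t| * `|z|.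
Proof.
case: z => a b; rewrite -[t *: _]/((t * a) +i* (t * b) : Rcomplex R) !normRcE.
by rewrite !exprMn -mulrDr sqrtrM ?sqr_ge0 // sqrtr_sqr.
Qed.

Lemma normRc_convex (t : R) (z w : Rcomplex R) : 0 <= t <= 1 ->
  `|t *: z + (1 - t) *: w| <= t * `|z| + (1 - t) * `|w|.
Proof.
move=> /andP[t0 t1].
by apply: le_trans (ler_normD _ _) _; rewrite !normRcZ !ger0_norm ?subr_ge0.
Qed.
End ComplexNorm.

Section Envelope.
Variable R : realType.
Implicit Types s t b d x y : R.

(* [envelope b d] is [sup_(s > 0) tangent s b d], attained at the positive root
   [tangent_point b d] of [d s^2 - b s - 1]. *)
Definition tangent s b d := 2 * b * s - d * s ^+ 2 + 2 + 2 * ln s.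

Definition tangent_point b d := (b + Num.sqrt (b ^+ 2 + 4 * d)) / (2 * d).

Definition envelope b d := tangent (tangent_point b d) b d.

Lemma tangent_point_gt0 b d : 0 < d -> 0 < tangent_point b d.
Proof.
rewrite /tangent_point => d0; set q := Num.sqrt _.
have hq : q ^+ 2 = b ^+ 2 + 4 * d by rewrite sqr_sqrtr //; nra.
have q0 : 0 <= q := sqrtr_ge0 _.
by rewrite divr_gt0 //; nra.
Qed.

Lemma tangent_pointP b d : 0 < d ->
  d * tangent_point b d - (tangent_point b d)^-1 = b.
Proof.
rewrite /tangent_point => d0; set q := Num.sqrt _.
have hq : q ^+ 2 = b ^+ 2 + 4 * d by rewrite sqr_sqrtr //; nra.
have q0 : 0 <= q := sqrtr_ge0 _.
have bq : b + q != 0 by rewrite gt_eqF //; nra.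
have qb : q ^+ 2 - b ^+ 2 != 0 by rewrite gt_eqF //; lra.
have -> : d = (q ^+ 2 - b ^+ 2) / 4 by lra.
by field; rewrite qb bq.
Qed.

Lemma tangent_le_envelope s b d : 0 < d -> 0 < s -> tangent s b d <= envelope b d.
Proof.
move=> d0 s0; rewrite /envelope.
have t0 := tangent_point_gt0 b d0; have hb := tangent_pointP b d0.
set t := tangent_point b d in t0 hb *; rewrite -hb /tangent.
have st0 : 0 < s / t by rewrite divr_gt0.
have hln : ln s - ln t <= s / t - 1.
  rewrite -ln_div ?posrE // -[X in ln X](subrK 1) addrC le_ln1Dx //; lra.
rewrite -subr_ge0.
have -> : 2 * (d * t - t^-1) * t - d * t ^+ 2 + 2 + 2 * ln t
          - (2 * (d * t - t^-1) * s - d * s ^+ 2 + 2 + 2 * ln s)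
          = d * (t - s) ^+ 2 + 2 * (s / t - 1 - (ln s - ln t)).
  by field; rewrite gt_eqF.
apply: addr_ge0; first by rewrite mulr_ge0 ?sqr_ge0 ?ltW.
by rewrite mulr_ge0 //; lra.
Qed.

Lemma ler_tangent s b1 b2 d : 0 <= s -> b1 <= b2 -> tangent s b1 d <= tangent s b2 d.
Proof. by move=> s0 b12; rewrite /tangent; nra. Qed.

Lemma tangent_conv s t b1 b2 d1 d2 :
  tangent s (t * b1 + (1 - t) * b2) (t * d1 + (1 - t) * d2) =
  t * tangent s b1 d1 + (1 - t) * tangent s b2 d2.
Proof. by rewrite /tangent; ring. Qed.

Lemma envelope_convex t b b1 b2 d1 d2 : 0 < d1 -> 0 < d2 -> 0 <= t <= 1 ->
  b <= t * b1 + (1 - t) * b2 ->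
  envelope b (t * d1 + (1 - t) * d2) <= t * envelope b1 d1 + (1 - t) * envelope b2 d2.
Proof.
move=> d10 d20 /andP[t0 t1] hb.
have dt0 : 0 < t * d1 + (1 - t) * d2 by nra.
have s0 := tangent_point_gt0 b dt0.
apply: le_trans (ler_tangent _ (ltW s0) hb) _.
rewrite tangent_conv.
by apply: lerD; apply: ler_wpM2l; rewrite ?subr_ge0 ?tangent_le_envelope.
Qed.

Lemma envelope_sv x y : 0 < x -> 0 < y ->
  envelope (x - y) (x * y) = x / y + ln (x / y) - ln (x * y).
Proof.
move=> x0 y0; rewrite /envelope.
have -> : tangent_point (x - y) (x * y) = y^-1.
  rewrite /tangent_point.
  have -> : (x - y) ^+ 2 + 4 * (x * y) = (x + y) ^+ 2 by ring.
  rewrite sqrtr_sqr ger0_norm; last lra.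
  by field; rewrite !gt_eqF.
rewrite /tangent lnV ?posrE // ln_div ?posrE // lnM ?posrE //.
by field; rewrite gt_eqF.
Qed.
End Envelope.

Section Halfspace.
Variable R : realType.

Definition ext_halfspace (f : 'M[R]_2 -> R -> R) (x : 'M[R]_2 * R) : \bar R :=
  if 0 < x.2 then (f x.1 x.2)%:E else +oo%E.

Lemma convex_ext_halfspace (f : 'M[R]_2 -> R -> R) :
  (forall F1 F2 d1 d2 t, 0 < d1 -> 0 < d2 -> 0 < t < 1 ->
     f (t *: F1 + (1 - t) *: F2) (t * d1 + (1 - t) * d2)
       <= t * f F1 d1 + (1 - t) * f F2 d2) ->
  convex_ext (ext_halfspace f).
Proof.
move=> f_conv; split=> [x|[F1 d1] [F2 d2] t t01].
  by rewrite /ext_halfspace; case: ifP.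
have /andP[t0 t1] := t01; have t1' : 0 < 1 - t by rewrite subr_gt0.
rewrite /ext_halfspace /=.
have [d10|] := ltrP 0 d1; last first.
  rewrite mulry gtr0_sg // mul1e addye ?leey //.
  by case: ifP => _; [rewrite -EFinM | rewrite mulry gtr0_sg // mul1e].
have [d20|] := ltrP 0 d2; last first.
  by rewrite [X in (_ + X)%E]mulry gtr0_sg // mul1e addey ?leey // -EFinM.
have -> : 0 < t * d1 + (1 - t) * d2 by rewrite addr_gt0 ?mulr_gt0.
by rewrite -!EFinM -EFinD lee_fin f_conv.
Qed.
End Halfspace.

Section ConformalParts.
Variable R : rcfType.
Implicit Types F : 'M[R]_2.

(* [F z = (conf_part F * z + aconf_part F * conj z) / 2]. *)
Definition conf_part F : Rcomplex R := (F 0 0 + F 1 1) +i* (F 1 0 - F 0 1).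
Definition aconf_part F : Rcomplex R := (F 0 0 - F 1 1) +i* (F 1 0 + F 0 1).

Lemma aconf_partD s t F1 F2 :
  aconf_part (s *: F1 + t *: F2) = s *: aconf_part F1 + t *: aconf_part F2.
Proof. by rewrite /aconf_part !mxE; congr (_ +i* _); ring. Qed.

Lemma det_conf_aconf F : \det F = (`|conf_part F| ^+ 2 - `|aconf_part F| ^+ 2) / 4.
Proof. by rewrite !sqr_normRc det_mx2; field. Qed.

Lemma mxtrace_conf_aconf F :
  \tr (F^T *m F) = (`|conf_part F| ^+ 2 + `|aconf_part F| ^+ 2) / 2.
Proof. by rewrite !sqr_normRc mxtrace_mx2 !mulmx2E !mxE; field. Qed.

Lemma aconf_le_conf F : 0 <= \det F -> `|aconf_part F| <= `|conf_part F|.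
Proof.
by move=> dF; rewrite -ler_sqr ?nnegrE //; move: dF; rewrite det_conf_aconf; lra.
Qed.
End ConformalParts.

Section SingularValues.
Variable R : realType.
Implicit Types F : 'M[R]_2.

Lemma sqrt_discr_conf_aconf F :
  Num.sqrt (\tr (F^T *m F) ^+ 2 - 4 * \det (F^T *m F))
  = `|conf_part F| * `|aconf_part F|.
Proof.
rewrite det_mulmx det_tr mxtrace_conf_aconf det_conf_aconf.
set A := `|conf_part F|; set B := `|aconf_part F|.
have -> : ((A ^+ 2 + B ^+ 2) / 2) ^+ 2 - 4 * ((A ^+ 2 - B ^+ 2) / 4 * ((A ^+ 2 - B ^+ 2) / 4))
          = (A * B) ^+ 2 by field.
by rewrite sqrtr_sqr ger0_norm // mulr_ge0 ?normr_ge0.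
Qed.

Lemma sv_maxE F : sv_max F = (`|conf_part F| + `|aconf_part F|) / 2.
Proof.
rewrite /sv_max /eig_max_sym2 sqrt_discr_conf_aconf mxtrace_conf_aconf.
set A := `|conf_part F|; set B := `|aconf_part F|.
have -> : ((A ^+ 2 + B ^+ 2) / 2 + A * B) / 2 = ((A + B) / 2) ^+ 2 by field.
by rewrite sqrtr_sqr ger0_norm // divr_ge0 // addr_ge0 ?normr_ge0.
Qed.

Lemma sv_minE F : 0 <= \det F -> sv_min F = (`|conf_part F| - `|aconf_part F|) / 2.
Proof.
move=> /aconf_le_conf BA.
rewrite /sv_min /eig_min_sym2 sqrt_discr_conf_aconf mxtrace_conf_aconf.
set A := `|conf_part F|; set B := `|aconf_part F| in BA *.
have -> : ((A ^+ 2 + B ^+ 2) / 2 - A * B) / 2 = ((A - B) / 2) ^+ 2 by field.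
by rewrite sqrtr_sqr ger0_norm // divr_ge0 // subr_ge0.
Qed.

Lemma W_magic_minusE F : 0 < \det F ->
  W_magic_minus F = envelope `|aconf_part F| (\det F).
Proof.
move=> dF; rewrite /W_magic_minus sv_maxE sv_minE ?ltW //.
move: dF; rewrite det_conf_aconf.
set A := `|conf_part F|; set B := `|aconf_part F| => dF.
have B0 : 0 <= B := normr_ge0 _.
have BA : B < A by rewrite -ltr_sqr ?nnegrE ?normr_ge0 //; lra.
rewrite -envelope_sv; try lra.
by congr envelope; field.
Qed.
End SingularValues.

Theorem lemma5p1 (R : realType) : polyconvex (@W_magic_minus R).
Proof.
exists (ext_halfspace (fun F d => envelope `|aconf_part F| d)); split.
  apply: convex_ext_halfspace => F1 F2 d1 d2 t d10 d20 /andP[t0 t1].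
  apply: envelope_convex => //; first by rewrite !ltW.
  by rewrite aconf_partD normRc_convex // !ltW.
move=> F; rewrite /ext_GLp /ext_halfspace /=.
by case: ifP => // dF; rewrite W_magic_minusE.
Qed.
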